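(* For every pair of integers $a,b$ with $2\leq a\leq b$, there exists a connected graph $G$ of some order $n\ge 3$ such that $px_k(G)=a$ and $rx_k(G)=b$ for each integer $k$ with $3\leq k\leq n$.
   Context: All graphs are finite, simple, undirected and connected. An edge-coloring of a graph assigns a color to each edge (adjacent edges may receive the same color). A tree in an edge-colored graph is proper if any two adjacent edges of the tree receive different colors, and rainbow if no two of its edges receive the same color. For $S\subseteq V(G)$, an $S$-tree is a subgraph of $G$ that is a tree containing all vertices of $S$. For a connected graph $G$ of order $n$ and an integer $k$ with $2\le k\le n$, an edge-coloring of $G$ is a $k$-proper coloring (resp. $k$-rainbow coloring) if for every set $S$ of $k$ vertices of $G$ there exists a proper (resp. rainbow) $S$-tree in $G$. The $k$-proper index $px_k(G)$ (resp. $k$-rainbow index $rx_k(G)$) is the minimum number of colors used in a $k$-proper coloring (resp. $k$-rainbow coloring) of $G$. *)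

From mathcomp Require Import all_boot.
Set Implicit Arguments.
Unset Strict Implicit.
Unset Printing Implicit Defensive.

Definition simple_graph (T : finType) (e : rel T) : Prop :=
  symmetric e /\ irreflexive e.

Definition graph_connected (T : finType) (e : rel T) : Prop :=
  forall x y : T, connect e x y.

Definition is_edge (T : finType) (e : rel T) (f : {set T}) : Prop :=
  exists x y : T, e x y /\ f = [set x; y].

Definition is_tree (T : finType) (e : rel T) (W : {set T}) (F : {set {set T}}) : Prop :=
  (forall f, f \in F -> is_edge e f /\ f \subset W) /\
  W != set0 /\
  (forall x y, x \in W -> y \in W ->
     connect (fun u v => [set u; v] \in F) x y) /\
  #|F| + 1 = #|W|.

(* An edge-coloring with (at most) m colors: a color for each 2-set
   (only its values on edges of G matter). *)
Definition proper_edges (T : finType) (m : nat) (c : {set T} -> 'I_m)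
  (F : {set {set T}}) : Prop :=
  forall f g, f \in F -> g \in F -> f != g -> f :&: g != set0 -> c f != c g.

Definition rainbow_edges (T : finType) (m : nat) (c : {set T} -> 'I_m)
  (F : {set {set T}}) : Prop :=
  {in F &, injective c}.

Definition k_proper_coloring (T : finType) (e : rel T) (k m : nat)
  (c : {set T} -> 'I_m) : Prop :=
  forall S : {set T}, #|S| = k ->
    exists W F, is_tree e W F /\ S \subset W /\ proper_edges c F.

Definition k_rainbow_coloring (T : finType) (e : rel T) (k m : nat)
  (c : {set T} -> 'I_m) : Prop :=
  forall S : {set T}, #|S| = k ->
    exists W F, is_tree e W F /\ S \subset W /\ rainbow_edges c F.

Definition is_min (P : nat -> Prop) (a : nat) : Prop :=
  P a /\ forall m, m < a -> ~ P m.

Definition proper_index_is (T : finType) (e : rel T) (k a : nat) : Prop :=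
  is_min (fun m => exists c : {set T} -> 'I_m, k_proper_coloring e k c) a.

Definition rainbow_index_is (T : finType) (e : rel T) (k a : nat) : Prop :=
  is_min (fun m => exists c : {set T} -> 'I_m, k_rainbow_coloring e k c) a.

From mathcomp Require Import all_boot zify.

Set Implicit Arguments.
Unset Strict Implicit.
Unset Printing Implicit Defensive.

(* The witness is the broom on vertices 0..b: the path 0 - 1 - ... - L followed
   by b - L leaves L+1..b attached to the hub L, with L = b - a + 1.  It is a
   tree whose edges are indexed by their child endpoint j in 1..b.  Edge j is a
   bridge, so every tree through 0 and j uses it; as k >= 3, some k-set contains
   0 and any two chosen vertices i, j, forcing edges i and j into the S-tree.
   Hence a rainbow coloring needs b colors, and a proper one needs as many
   colors as the a = b - L + 1 edges at the hub.  Conversely, edges sharing a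
   vertex have indices at most b - L apart, so coloring edge j by j mod a
   (resp. j mod b) makes the whole broom proper (resp. rainbow). *)

Lemma modn_neq_close d i j : i != j -> i - j < d -> j - i < d -> i %% d != j %% d.
Proof.
wlog lt_ij : i j / i < j.
  move=> wl ne ij ji; case: (ltngtP i j) => [lt|gt|eq].
  - exact: wl.
  - by rewrite eq_sym; apply: wl; rewrite // eq_sym.
  - by rewrite eq eqxx in ne.
move=> _ _ lt_d; apply/negP=> /eqP eq_mod.
have : d %| j - i by rewrite -eqn_mod_dvd ?eq_mod // ltnW.
by move/dvdn_leq; lia.
Qed.

Lemma card_lt_collision (aT rT : finType) (f : aT -> rT) :
  #|rT| < #|aT| -> exists x y, x != y /\ f x = f y.
Proof.
move=> lt_card; have /injectivePn[x [y xy fxy]] : ~~ injectiveb f.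
  by apply: contraTN lt_card => /injectiveP/leq_card; rewrite leqNgt.
by exists x, y.
Qed.

Lemma exists_superset_card (T : finType) (X : {set T}) k :
  #|X| <= k <= #|T| -> exists2 S : {set T}, X \subset S & #|S| = k.
Proof.
case/andP=> le_Xk; rewrite -(subnKC le_Xk); move: (k - #|X|) => n {le_Xk k}.
elim: n X => [|n IH] X le_XnT; first by exists X; rewrite ?addn0.
have /card_gt0P[x] : 0 < #|~: X| by rewrite cardsCs setCK; lia.
rewrite in_setC => xNX.
have card_xX : #|x |: X| = #|X|.+1 by rewrite cardsU1 xNX.
have [|S sub_xXS card_S] := IH (x |: X); first by rewrite card_xX; lia.
exists S; first exact: subset_trans (subsetUr _ _) sub_xXS.
by rewrite card_S card_xX addnS.
Qed.

Lemma connect_crossing (T : finType) (r : rel T) (A : pred T) x y :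
  connect r x y -> A x -> ~~ A y -> exists u v, [/\ r u v, A u & ~~ A v].
Proof.
move/connectP=> [p r_p ->]; elim: p x r_p => [|z p IH] x /=; first by move=> _ ->.
case/andP=> r_xz r_p Ax NAlast; case Az: (A z); first exact: IH r_p Az NAlast.
by exists x, z; rewrite Az.
Qed.

Lemma tree_contains_bridge (T : finType) (e : rel T) W F (A : pred T) (f : {set T}) x y :
  (forall u v, e u v -> A u != A v -> [set u; v] = f) ->
  is_tree e W F -> x \in W -> y \in W -> A x != A y -> f \in F.
Proof.
move=> bridge [edgeF [_ [connF _]]] xW yW Axy.
have [|u [v [uvF /eqP Au Av]]] :=
  @connect_crossing _ _ (fun w => A w == A x) _ _ (connF x y xW yW) (eqxx _).
  by rewrite eq_sym.
have [[x' [y' [e_xy uv_xy]]] _] := edgeF _ uvF.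
rewrite -(bridge x' y') // -?uv_xy //; apply: contra Av => /eqP Axy'.
have Aw w : w \in [set x'; y'] -> A w = A x' by case/set2P=> ->.
by rewrite -Au !Aw -?uv_xy ?set21 ?set22.
Qed.

Lemma connect_parent n (p : 'I_n.+1 -> 'I_n.+1) (r : rel 'I_n.+1) :
  (forall v : 'I_n.+1, 0 < v -> [/\ p v < v, r (p v) v & r v (p v)]) ->
  forall x y, connect r x y.
Proof.
move=> parent_r.
have to_root m (v : 'I_n.+1) : v < m -> connect r ord0 v /\ connect r v ord0.
  elim: m v => // m IH v lt_vm; case: (posnP v) => [v0|v_gt0].
    by rewrite (_ : v = ord0) //; apply: val_inj.
  have [lt_pv r_pv r_vp] := parent_r v v_gt0.
  have [from_root to_root] := IH (p v) (leq_trans lt_pv lt_vm).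
  by split; [exact: connect_trans from_root (connect1 r_pv)
            | exact: connect_trans (connect1 r_vp) to_root].
move=> x y; have [_ x_root] := to_root _ x (ltnSn _).
have [root_y _] := to_root _ y (ltnSn _).
exact: connect_trans x_root root_y.
Qed.

Lemma ord_gt0 n (j : 'I_n.+1) : (0 < j) = (j \in [set~ ord0]).
Proof. by rewrite !inE -(inj_eq val_inj) lt0n. Qed.

Section Broom.

Variables b L : nat.

Definition broom_parent (j : 'I_b.+1) : 'I_b.+1 := inord (if j <= L then j.-1 else L).

Lemma broom_parentE (j : 'I_b.+1) : broom_parent j = (if j <= L then j.-1 else L) :> nat.
Proof. by rewrite inordK //; have := ltn_ord j; case: ifP; lia. Qed.

Lemma broom_parent_lt (j : 'I_b.+1) : 0 < j -> broom_parent j < j.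
Proof. by rewrite broom_parentE; case: ifP; lia. Qed.

Definition broom : rel 'I_b.+1 := fun u v =>
  (0 < v) && (u == broom_parent v) || (0 < u) && (v == broom_parent u).

Lemma broom_simple : simple_graph broom.
Proof.
split=> [u v|u]; first by rewrite /broom orbC.
rewrite /broom orbb; apply/negP=> /andP[u_gt0 /eqP u_par].
by have := broom_parent_lt u_gt0; rewrite -u_par ltnn.
Qed.

Lemma broom_parent_adj (v : 'I_b.+1) :
  0 < v -> broom (broom_parent v) v /\ broom v (broom_parent v).
Proof. by move=> v_gt0; rewrite /broom v_gt0 eqxx /= orbT. Qed.

Lemma broom_connected : graph_connected broom.
Proof.
apply: (connect_parent (p := broom_parent)) => v v_gt0.
by have [? ?] := broom_parent_adj v_gt0; split=> //; exact: broom_parent_lt.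
Qed.

Definition broom_edge (j : 'I_b.+1) : {set 'I_b.+1} := [set broom_parent j; j].

(* Edge j is recovered as its larger endpoint. *)
Definition child (f : {set 'I_b.+1}) : nat := \max_(v in f) v.

Lemma child_edge (j : 'I_b.+1) : 0 < j -> child (broom_edge j) = j.
Proof.
move=> j_gt0; have lt_pj := broom_parent_lt j_gt0.
rewrite /child /broom_edge big_setU1 ?big_set1 /=; first by apply/maxn_idPr/ltnW.
by rewrite inE; apply: contraTneq lt_pj => ->; rewrite ltnn.
Qed.

Lemma broom_edge_inj (i j : 'I_b.+1) :
  0 < i -> 0 < j -> broom_edge i = broom_edge j -> i = j.
Proof.
by move=> i_gt0 j_gt0 eq_ij; apply: ord_inj; rewrite -child_edge // eq_ij child_edge.
Qed.

(* The far side of edge j from the root: the subtree hanging from j. *)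
Definition broom_desc (j v : 'I_b.+1) : bool := if j <= L then j <= v else v == j.

Lemma broom_desc_parent (w j : 'I_b.+1) :
  broom_desc j (broom_parent w) != broom_desc j w -> w = j.
Proof.
rewrite /broom_desc -!(inj_eq val_inj) /= broom_parentE => cross.
apply: val_inj; move: cross; have := ltn_ord w; have := ltn_ord j.
by case: (leqP j L); case: (leqP w L) => /=; lia.
Qed.

Lemma broom_bridge (j : 'I_b.+1) u v :
  broom u v -> broom_desc j u != broom_desc j v -> [set u; v] = broom_edge j.
Proof.
case/orP=> /andP[_ /eqP ->] cross.
  by rewrite (broom_desc_parent cross).
by rewrite eq_sym in cross; rewrite setUC (broom_desc_parent cross).
Qed.

Lemma broom_tree_edge W F (j : 'I_b.+1) :
  is_tree broom W F -> ord0 \in W -> j \in W -> 0 < j -> broom_edge j \in F.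
Proof.
move=> treeF W0 Wj j_gt0; apply: tree_contains_bridge treeF W0 Wj _.
  exact: broom_bridge.
rewrite /broom_desc eqxx -(inj_eq val_inj) /=; case: ifP => _ //; lia.
Qed.

Definition broom_edges : {set {set 'I_b.+1}} := broom_edge @: [set~ ord0].

Lemma broom_edges_tree : is_tree broom setT broom_edges.
Proof.
split; [|split; [|split]].
- move=> f /imsetP[j]; rewrite -ord_gt0 => j_gt0 ->; split; last exact: subsetT.
  by exists (broom_parent j), j; have [] := broom_parent_adj j_gt0.
- by apply/set0Pn; exists ord0; rewrite inE.
- move=> x y _ _; apply: (connect_parent (p := broom_parent)) => v v_gt0.
  have in_edges : broom_edge v \in broom_edges by rewrite imset_f // -ord_gt0.
  by rewrite broom_parent_lt // in_edges setUC in_edges.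
- rewrite cardsT card_ord card_in_imset ?cardsC1 ?card_ord ?addn1 //.
  by move=> i j; rewrite -!ord_gt0; exact: broom_edge_inj.
Qed.

Lemma broom_spanning (P : {set {set 'I_b.+1}} -> Prop) : P broom_edges ->
  forall S : {set 'I_b.+1}, exists W F, is_tree broom W F /\ S \subset W /\ P F.
Proof.
move=> P_edges S; exists setT, broom_edges.
by rewrite subsetT; split; first exact: broom_edges_tree.
Qed.

Lemma broom_tree_through (P : {set {set 'I_b.+1}} -> Prop) k (i j : 'I_b.+1) :
  3 <= k <= b.+1 -> 0 < i -> 0 < j ->
  (forall S : {set 'I_b.+1}, #|S| = k ->
     exists W F, is_tree broom W F /\ S \subset W /\ P F) ->
  exists F, [/\ P F, broom_edge i \in F & broom_edge j \in F].
Proof.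
move=> k_bounds i_gt0 j_gt0 treeP; pose X := [set ord0; i; j].
have card_X : #|X| <= 3.
  apply: leq_trans (leq_card_setU _ _) _; rewrite cards1.
  by apply: leq_trans (leq_add (leq_card_setU _ _) (leqnn _)) _; rewrite !cards1.
have [|S sub_XS card_S] := exists_superset_card (X := X) (k := k).
  by rewrite card_ord; lia.
have [W [F [treeF [sub_SW PF]]]] := treeP S card_S.
have inW v : v \in X -> v \in W.
  by move=> Xv; apply: subsetP sub_SW _ (subsetP sub_XS _ Xv).
by exists F; split=> //; rewrite (broom_tree_edge treeF) // inW // !inE eqxx ?orbT.
Qed.

Lemma broom_edges_meet (i j : 'I_b.+1) :
  L < b -> broom_edge i :&: broom_edge j != set0 -> i - j <= b - L.
Proof.
move=> L_lt_b /set0Pn[v /setIP[/set2P vi /set2P vj]].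
have := broom_parentE i; have := broom_parentE j; have := ltn_ord i; have := ltn_ord j.
by case: (leqP i L); case: (leqP j L); case: vi vj => [->|->] [] /(congr1 val) /=; lia.
Qed.

Lemma broom_hub_edge (j : 'I_b.+1) : L <= j -> inord L \in broom_edge j.
Proof.
move=> le_Lj; have lt_Lb : L < b.+1 by apply: leq_ltn_trans le_Lj _.
apply/set2P; case: (ltnP L j) => [lt_Lj|le_jL]; [left|right]; apply: ord_inj.
  by rewrite broom_parentE inordK // leqNgt lt_Lj.
by rewrite inordK //; lia.
Qed.

Definition child_color m (m_gt0 : 0 < m) (f : {set 'I_b.+1}) : 'I_m :=
  Ordinal (ltn_pmod (child f) m_gt0).

Lemma broom_proper_coloring k :
  L < b -> k_proper_coloring broom k (child_color (ltn0Sn (b - L))).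
Proof.
move=> L_lt_b S _; apply: (broom_spanning (P := proper_edges _)).
move=> f g /imsetP[i + ->] /imsetP[j + ->]; rewrite -!ord_gt0 => i_gt0 j_gt0 neq meet.
rewrite -(inj_eq val_inj) /= !child_edge //; apply: modn_neq_close.
- by apply: contraNneq neq => /ord_inj ->.
- by have := broom_edges_meet L_lt_b meet; lia.
- by rewrite setIC in meet; have := broom_edges_meet L_lt_b meet; lia.
Qed.

Lemma broom_rainbow_coloring k (b_gt0 : 0 < b) :
  k_rainbow_coloring broom k (child_color b_gt0).
Proof.
move=> S _; apply: (broom_spanning (P := rainbow_edges _)).
move=> f g /imsetP[i + ->] /imsetP[j + ->]; rewrite -!ord_gt0 => i_gt0 j_gt0.
move=> /(congr1 val) /=; rewrite !child_edge // => /eqP eq_mod; congr broom_edge.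
apply/ord_inj/eqP; apply: contraLR eq_mod => neq; apply: modn_neq_close neq _ _;
  by have := ltn_ord i; have := ltn_ord j; lia.
Qed.

Lemma broom_proper_lower k m (c : {set 'I_b.+1} -> 'I_m) :
  0 < L < b -> 3 <= k <= b.+1 -> m <= b - L -> ~ k_proper_coloring broom k c.
Proof.
move=> /andP[L_gt0 L_lt_b] k_bounds le_m c_proper.
pose hub_nbr (t : 'I_(b - L).+1) : 'I_b.+1 := inord (L + t).
have hub_nbrE t : hub_nbr t = L + t :> nat by rewrite inordK //; have := ltn_ord t; lia.
have nbr_gt0 t : 0 < hub_nbr t by rewrite hub_nbrE; lia.
have [|t1 [t2 [neq_t same_color]]] := card_lt_collision (c \o broom_edge \o hub_nbr).
  by rewrite !card_ord.
have [F [c_F F1 F2]] := broom_tree_through k_bounds (nbr_gt0 t1) (nbr_gt0 t2) c_proper.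
have neq_edges : broom_edge (hub_nbr t1) != broom_edge (hub_nbr t2).
  apply: contra neq_t => /eqP/(broom_edge_inj (nbr_gt0 _) (nbr_gt0 _))/(congr1 val).
  by rewrite /= !hub_nbrE => /addnI eq_t; apply/eqP/ord_inj.
have meet : broom_edge (hub_nbr t1) :&: broom_edge (hub_nbr t2) != set0.
  by apply/set0Pn; exists (inord L); rewrite inE !broom_hub_edge // hub_nbrE leq_addr.
by have := c_F _ _ F1 F2 neq_edges meet; rewrite [c _]same_color eqxx.
Qed.

Lemma broom_rainbow_lower k m (c : {set 'I_b.+1} -> 'I_m) :
  3 <= k <= b.+1 -> m < b -> ~ k_rainbow_coloring broom k c.
Proof.
move=> k_bounds lt_m c_rainbow.
pose succ_vertex (t : 'I_b) : 'I_b.+1 := inord t.+1.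
have succ_vertexE t : succ_vertex t = t.+1 :> nat by rewrite inordK // ltnS.
have succ_gt0 t : 0 < succ_vertex t by rewrite succ_vertexE.
have [|t1 [t2 [neq_t same_color]]] := card_lt_collision (c \o broom_edge \o succ_vertex).
  by rewrite !card_ord.
have [F [c_F F1 F2]] := broom_tree_through k_bounds (succ_gt0 t1) (succ_gt0 t2) c_rainbow.
have /(broom_edge_inj (succ_gt0 _) (succ_gt0 _))/(congr1 val) := c_F _ _ F1 F2 same_color.
by rewrite /= !succ_vertexE => -[eq_t]; rewrite (ord_inj eq_t) eqxx in neq_t.
Qed.

Lemma broom_proper_index k :
  0 < L < b -> 3 <= k <= b.+1 -> proper_index_is broom k (b - L).+1.
Proof.
move=> L_bounds k_bounds; split=> [|m lt_m [c c_proper]].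
  exists (child_color (ltn0Sn (b - L))).
  by apply: broom_proper_coloring; case/andP: L_bounds.
exact: broom_proper_lower c_proper.
Qed.

Lemma broom_rainbow_index k :
  0 < b -> 3 <= k <= b.+1 -> rainbow_index_is broom k b.
Proof.
move=> b_gt0 k_bounds; split=> [|m lt_m [c c_rainbow]].
  by exists (child_color b_gt0); apply: broom_rainbow_coloring.
exact: broom_rainbow_lower c_rainbow.
Qed.

End Broom.

Theorem mainTheorem14 (a b : nat) (hab : 2 <= a <= b) :
  exists (T : finType) (e : rel T),
    [/\ simple_graph e, graph_connected e, 3 <= #|T| &
      forall k, 3 <= k <= #|T| ->
        proper_index_is e k a /\ rainbow_index_is e k b].
Proof.
exists 'I_b.+1, (@broom b (b - a + 1)); split.
- exact: broom_simple.
- exact: broom_connected.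
- by rewrite card_ord; lia.
- rewrite card_ord => k k_bounds; split; last by apply: broom_rainbow_index; lia.
  have a_eq : (b - (b - a + 1)).+1 = a by lia.
  by have := @broom_proper_index b (b - a + 1) k; rewrite a_eq; apply; lia.
Qed.
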